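(* In System $\mathsf{F_\wedge}$, if $\Theta, X <: S \vdash t : T$, then $\Theta \vdash \Lambda (X<:\top).\,t[X\wedge S/X] : \forall X.\,T[X\wedge S/X]$.
   Context: System $\mathsf{F_\wedge}$: raw types $T ::= \top \mid X \mid T \to T \mid \forall X.T \mid T \wedge T$ ($\forall X.T$ means $\forall(X<:\top).T$), up to $\alpha$-conversion. Contexts: finite sequences of $X<:T$ or $x:T$ with distinct variables, each type well-formed over the preceding part. Subtyping rules: (Var) $\Theta,X<:T,\Theta'\vdash X<:T$; (Top) $T<:\top$; (Refl); (Trans); ($\to$) from $S'<:S$, $T<:T'$ infer $S\to T<:S'\to T'$; ($\forall$) from $\Theta,X<:\top\vdash S<:T$ infer $\Theta\vdash\forall X.S<:\forall X.T$; (meet) $S\wedge S'<:S$, $S\wedge S'<:S'$, from $T<:S$, $T<:S'$ infer $T<:S\wedge S'$. Raw terms $t ::= \mathsf{top} \mid x \mid \lambda(x:T).t \mid \Lambda(X<:T).t \mid t\,t \mid t\{T\}$. Typing rules: $\Theta\vdash\mathsf{top}:\top$; $\Theta,x:T,\Theta'\vdash x:T$; (sub) from $t:T$ and $T<:T'$ infer $t:T'$; from $\Theta,x:S\vdash t:T$ infer $\Theta\vdash\lambda(x:S).t:S\to T$; from $t:S\to T$ and $s:S$ infer $t\,s:T$; from $\Theta,X<:S\vdash t:T$ infer $\Theta\vdash\Lambda(X<:S).t:\forall(X<:S).T$; from $\Theta\vdash t:\forall(X<:S).T$ and $\Theta\vdash S'<:S$ infer $\Theta\vdash t\{S'\}:T[S'/X]$.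 $t[X\wedge S/X]$ substitutes $X \wedge S$ for $X$ in all type annotations of $t$. *)

(* System F_meet with de Bruijn indices (alpha-conversion built in).
   Type variables and term variables live in separate index spaces. *)
From Stdlib Require Import List.
Import ListNotations.

(* Raw types: Top | X | T -> T | forall X.T (= forall (X <: Top).T) | T /\ T *)
Inductive ty : Type :=
| TTop : ty
| TVar : nat -> ty
| TArr : ty -> ty -> ty
| TAll : ty -> ty
| TMeet : ty -> ty -> ty.

Inductive tm : Type :=
| tmTop : tm
| tmVar : nat -> tm                 (* term variable (de Bruijn, term binders only) *)
| tmAbs : ty -> tm -> tm
| tmTAbs : ty -> tm -> tm
| tmApp : tm -> tm -> tm
| tmTApp : tm -> ty -> tm.

Definition up_ren (xi : nat -> nat) : nat -> nat :=
  fun n => match n with 0 => 0 | S m => S (xi m) end.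

Fixpoint ty_ren (xi : nat -> nat) (T : ty) : ty :=
  match T with
  | TTop => TTop
  | TVar n => TVar (xi n)
  | TArr A B => TArr (ty_ren xi A) (ty_ren xi B)
  | TAll B => TAll (ty_ren (up_ren xi) B)
  | TMeet A B => TMeet (ty_ren xi A) (ty_ren xi B)
  end.

Definition shift1 (T : ty) : ty := ty_ren S T.

Definition up_sub (sigma : nat -> ty) : nat -> ty :=
  fun n => match n with 0 => TVar 0 | S m => shift1 (sigma m) end.

Fixpoint ty_subst (sigma : nat -> ty) (T : ty) : ty :=
  match T with
  | TTop => TTop
  | TVar n => sigma n
  | TArr A B => TArr (ty_subst sigma A) (ty_subst sigma B)
  | TAll B => TAll (ty_subst (up_sub sigma) B)
  | TMeet A B => TMeet (ty_subst sigma A) (ty_subst sigma B)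
  end.

Fixpoint tm_tysubst (sigma : nat -> ty) (t : tm) : tm :=
  match t with
  | tmTop => tmTop
  | tmVar n => tmVar n
  | tmAbs T b => tmAbs (ty_subst sigma T) (tm_tysubst sigma b)
  | tmTAbs T b => tmTAbs (ty_subst sigma T) (tm_tysubst (up_sub sigma) b)
  | tmApp a b => tmApp (tm_tysubst sigma a) (tm_tysubst sigma b)
  | tmTApp a T => tmTApp (tm_tysubst sigma a) (ty_subst sigma T)
  end.

Definition single (U : ty) : nat -> ty :=
  fun n => match n with 0 => U | S m => TVar m end.

(* Contexts: the head of the list is the most recent (rightmost) entry. *)
Inductive entry : Type :=
| ETy : ty -> entry      (* X <: T *)
| ETm : ty -> entry.

Definition ctx := list entry.

Fixpoint ntyvars (G : ctx) : nat :=
  match G with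
  | [] => 0
  | ETy _ :: G' => S (ntyvars G')
  | ETm _ :: G' => ntyvars G'
  end.

Fixpoint wf_ty (k : nat) (T : ty) : Prop :=
  match T with
  | TTop => True
  | TVar n => n < k
  | TArr A B => wf_ty k A /\ wf_ty k B
  | TAll B => wf_ty (S k) B
  | TMeet A B => wf_ty k A /\ wf_ty k B
  end.

Fixpoint wf_ctx (G : ctx) : Prop :=
  match G with
  | [] => True
  | ETy T :: G' => wf_ty (ntyvars G') T /\ wf_ctx G'
  | ETm T :: G' => wf_ty (ntyvars G') T /\ wf_ctx G'
  end.

(* bound of type variable n, expressed over the whole context *)
Fixpoint lookup_tv (G : ctx) (n : nat) : option ty :=
  match G with
  | [] => None
  | ETy T :: G' =>
      match n with
      | 0 => Some (shift1 T)
      | S m => option_map shift1 (lookup_tv G' m)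
      end
  | ETm _ :: G' => lookup_tv G' n
  end.

(* type of term variable n, expressed over the whole context *)
Fixpoint lookup_v (G : ctx) (n : nat) : option ty :=
  match G with
  | [] => None
  | ETm T :: G' =>
      match n with
      | 0 => Some T
      | S m => lookup_v G' m
      end
  | ETy _ :: G' => option_map shift1 (lookup_v G' n)
  end.

Inductive sub : ctx -> ty -> ty -> Prop :=
| S_Var : forall G n T, lookup_tv G n = Some T -> sub G (TVar n) T
| S_Top : forall G T, sub G T TTop
| S_Refl : forall G T, sub G T T
| S_Trans : forall G S U T, sub G S U -> sub G U T -> sub G S T
| S_Arr : forall G S S' T T', sub G S' S -> sub G T T' -> sub G (TArr S T) (TArr S' T')
| S_All : forall G S T, sub (ETy TTop :: G) S T -> sub G (TAll S) (TAll T)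
| S_MeetL : forall G S S', sub G (TMeet S S') S
| S_MeetR : forall G S S', sub G (TMeet S S') S'
| S_Meet : forall G T S S', sub G T S -> sub G T S' -> sub G T (TMeet S S').

(* Typing.  Since the only quantified types are forall (X <: Top).T, the rules for
   type abstraction / application are the instances of the general rules with bound Top. *)
Inductive typ : ctx -> tm -> ty -> Prop :=
| T_Top : forall G, typ G tmTop TTop
| T_Var : forall G n T, lookup_v G n = Some T -> typ G (tmVar n) T
| T_Sub : forall G t T T', typ G t T -> sub G T T' -> typ G t T'
| T_Abs : forall G S t T, typ (ETm S :: G) t T -> typ G (tmAbs S t) (TArr S T)
| T_App : forall G t s S T, typ G t (TArr S T) -> typ G s S -> typ G (tmApp t s) T
| T_TAbs : forall G t T, typ (ETy TTop :: G) t T -> typ G (tmTAbs TTop t) (TAll T)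
| T_TApp : forall G t T S', typ G t (TAll T) -> sub G S' TTop ->
    typ G (tmTApp t S') (ty_subst (single S') T).

(* The substitution [X /\ S / X] in context  Theta, X <: Top  where X is type var 0
   and S is well-formed over Theta (hence shifted by one). *)
Definition meet_sub (U : ty) : nat -> ty :=
  fun n => match n with 0 => TMeet (TVar 0) (shift1 U) | S m => TVar (S m) end.

(** The substitution [X /\ S / X] sends [X] to a type that is below [S] even
    when [X] itself is only bounded by [Top].  Type substitutions that map
    every type variable to a subtype of its (substituted) bound preserve
    subtyping and typing, so [t[X /\ S/X]] is typable in [Theta, X <: Top];
    the rule for type abstraction then concludes. *)

From Stdlib Require Import List.

Lemma up_ren_ext f g : (forall n, f n = g n) -> forall n, up_ren f n = up_ren g n.
Proof. intros H [|n]; simpl; auto. Qed.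

Lemma ty_ren_ext T : forall f g, (forall n, f n = g n) -> ty_ren f T = ty_ren g T.
Proof. induction T; intros f g H; simpl; f_equal; auto using up_ren_ext. Qed.

Lemma up_sub_ext f g : (forall n, f n = g n) -> forall n, up_sub f n = up_sub g n.
Proof. intros H [|n]; simpl; [reflexivity | now rewrite H]. Qed.

Lemma ty_subst_ext T : forall f g, (forall n, f n = g n) -> ty_subst f T = ty_subst g T.
Proof. induction T; intros f g H; simpl; f_equal; auto using up_sub_ext. Qed.

Lemma ty_ren_comp T : forall f g, ty_ren f (ty_ren g T) = ty_ren (fun n => f (g n)) T.
Proof.
  induction T; intros f g; simpl; f_equal; auto.
  rewrite IHT. apply ty_ren_ext. now intros [|n].
Qed.

Lemma ty_subst_ren T : forall s f, ty_subst s (ty_ren f T) = ty_subst (fun n => s (f n)) T.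
Proof.
  induction T; intros s f; simpl; f_equal; auto.
  rewrite IHT. apply ty_subst_ext. now intros [|n].
Qed.

Lemma ty_ren_subst T : forall f s,
  ty_ren f (ty_subst s T) = ty_subst (fun n => ty_ren f (s n)) T.
Proof.
  induction T; intros f s; simpl; f_equal; auto.
  rewrite IHT. apply ty_subst_ext. intros [|n]; simpl; [reflexivity |].
  unfold shift1. rewrite !ty_ren_comp. now apply ty_ren_ext.
Qed.

Lemma ty_subst_up_shift1 s T : ty_subst (up_sub s) (shift1 T) = shift1 (ty_subst s T).
Proof.
  unfold shift1. rewrite ty_subst_ren, ty_ren_subst. now apply ty_subst_ext.
Qed.

Lemma ty_subst_comp T : forall s s',
  ty_subst s (ty_subst s' T) = ty_subst (fun n => ty_subst s (s' n)) T.
Proof.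
  induction T; intros s s'; simpl; f_equal; auto.
  rewrite IHT. apply ty_subst_ext. intros [|n]; simpl; [reflexivity |].
  apply ty_subst_up_shift1.
Qed.

Lemma ty_subst_var_ren T : forall f, ty_subst (fun n => TVar (f n)) T = ty_ren f T.
Proof.
  induction T; intros f; simpl; f_equal; auto.
  rewrite <- IHT. apply ty_subst_ext. now intros [|n].
Qed.

Lemma ty_subst_id T : ty_subst TVar T = T.
Proof.
  rewrite (ty_subst_ext T TVar (fun n => TVar n)) by reflexivity.
  rewrite ty_subst_var_ren. induction T; simpl; f_equal; auto.
  rewrite <- IHT at 2. apply ty_ren_ext. now intros [|n].
Qed.

Lemma ty_subst_single s U T :
  ty_subst s (ty_subst (single U) T)
  = ty_subst (single (ty_subst s U)) (ty_subst (up_sub s) T).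
Proof.
  rewrite !ty_subst_comp. apply ty_subst_ext. intros [|n]; simpl; [reflexivity |].
  unfold shift1. rewrite ty_subst_ren. symmetry. apply ty_subst_id.
Qed.

Lemma sub_lookup_tv_ext G A B : sub G A B ->
  forall G', (forall n, lookup_tv G n = lookup_tv G' n) -> sub G' A B.
Proof.
  induction 1; intros G' HG; try solve [econstructor; eauto].
  - constructor. now rewrite <- HG.
  - constructor. apply IHsub. intros [|n]; simpl; [reflexivity | now rewrite HG].
Qed.

Lemma sub_ren G A B : sub G A B -> forall D f,
  (forall n U, lookup_tv G n = Some U -> lookup_tv D (f n) = Some (ty_ren f U)) ->
  sub D (ty_ren f A) (ty_ren f B).
Proof.
  induction 1; intros D f HD; simpl; try solve [econstructor; eauto].
  constructor. apply IHsub. intros [|n] U HU; simpl in *.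
  - now inversion HU.
  - destruct (lookup_tv G n) eqn:E; inversion HU; subst.
    rewrite (HD _ _ E). simpl. f_equal. unfold shift1. rewrite !ty_ren_comp.
    now apply ty_ren_ext.
Qed.

Lemma sub_shift1 G A B : sub G A B -> sub (ETy TTop :: G) (shift1 A) (shift1 B).
Proof.
  intros H. apply (sub_ren _ _ _ H). intros n U HU. simpl. now rewrite HU.
Qed.

Definition subst_respects_bounds (G D : ctx) (s : nat -> ty) : Prop :=
  forall n U, lookup_tv G n = Some U -> sub D (s n) (ty_subst s U).

Definition subst_respects_types (G D : ctx) (s : nat -> ty) : Prop :=
  forall n U, lookup_v G n = Some U -> lookup_v D n = Some (ty_subst s U).

Lemma subst_respects_bounds_up G D s :
  subst_respects_bounds G D s ->
  subst_respects_bounds (ETy TTop :: G) (ETy TTop :: D) (up_sub s).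
Proof.
  intros H [|n] U HU; simpl in *.
  - inversion HU; subst. apply S_Top.
  - destruct (lookup_tv G n) eqn:E; inversion HU; subst.
    rewrite ty_subst_up_shift1. apply sub_shift1, H, E.
Qed.

Lemma subst_respects_bounds_tm G D s U V :
  subst_respects_bounds G D s -> subst_respects_bounds (ETm U :: G) (ETm V :: D) s.
Proof.
  intros H n B HB. eapply sub_lookup_tv_ext; [now apply H | reflexivity].
Qed.

Lemma subst_respects_types_up G D s :
  subst_respects_types G D s ->
  subst_respects_types (ETy TTop :: G) (ETy TTop :: D) (up_sub s).
Proof.
  intros H n U HU; simpl in *.
  destruct (lookup_v G n) eqn:E; inversion HU; subst.
  rewrite (H _ _ E). simpl. now rewrite ty_subst_up_shift1.
Qed.

Lemma subst_respects_types_tm G D s U :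
  subst_respects_types G D s ->
  subst_respects_types (ETm U :: G) (ETm (ty_subst s U) :: D) s.
Proof. intros H [|n] B HB; simpl in *; [now inversion HB | auto]. Qed.

Lemma sub_subst G A B : sub G A B -> forall D s,
  subst_respects_bounds G D s -> sub D (ty_subst s A) (ty_subst s B).
Proof.
  induction 1; intros D s HD; simpl; try solve [econstructor; eauto].
  - now apply HD.
  - constructor. now apply IHsub, subst_respects_bounds_up.
Qed.

Lemma typ_tysubst G t T : typ G t T -> forall D sigma,
  subst_respects_bounds G D sigma -> subst_respects_types G D sigma ->
  typ D (tm_tysubst sigma t) (ty_subst sigma T).
Proof.
  induction 1; intros D sigma HB HT; simpl.
  - constructor.
  - constructor. auto.
  - eapply T_Sub; [now apply IHtyp | eapply sub_subst; eauto].
  - constructor. apply IHtyp.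
    + now apply subst_respects_bounds_tm.
    + now apply subst_respects_types_tm.
  - eapply T_App; [apply IHtyp1 | apply IHtyp2]; auto.
  - constructor.
    apply IHtyp; [now apply subst_respects_bounds_up | now apply subst_respects_types_up].
  - rewrite ty_subst_single. apply T_TApp; [now apply IHtyp | apply S_Top].
Qed.

Lemma meet_sub_shift1 U T : ty_subst (meet_sub U) (shift1 T) = shift1 T.
Proof. unfold shift1. rewrite ty_subst_ren. apply ty_subst_var_ren. Qed.

Lemma meet_sub_respects_bounds G U :
  subst_respects_bounds (ETy U :: G) (ETy TTop :: G) (meet_sub U).
Proof.
  intros [|n] B HB; simpl in HB.
  - inversion HB; subst. rewrite meet_sub_shift1. apply S_MeetR.
  - destruct (lookup_tv G n) eqn:E; inversion HB; subst.
    rewrite meet_sub_shift1. apply S_Var. simpl. now rewrite E.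
Qed.

Lemma meet_sub_respects_types G U :
  subst_respects_types (ETy U :: G) (ETy TTop :: G) (meet_sub U).
Proof.
  intros n B HB; simpl in *.
  destruct (lookup_v G n) eqn:E; inversion HB; subst.
  now rewrite meet_sub_shift1.
Qed.

Theorem proposition5p4 (Theta : ctx) (S : ty) (t : tm) (T : ty) :
  wf_ctx (cons (ETy S) Theta) ->
  typ (cons (ETy S) Theta) t T ->
  typ Theta (tmTAbs TTop (tm_tysubst (meet_sub S) t)) (TAll (ty_subst (meet_sub S) T)).
Proof.
  intros _ Ht. apply T_TAbs. apply (typ_tysubst _ _ _ Ht).
  - apply meet_sub_respects_bounds.
  - apply meet_sub_respects_types.
Qed.
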